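(* Let $(\flat,\mathrm{Re}_t,\mathrm{Re}_b)$ be a fibered geometric site with isotopies, with $\flat\colon\mathfrak{GEmb}_d\to\mathrm{GCart}$. For every $L\in C^\infty\mathrm{Cart}$, every morphism $f\colon p\to q$ in $(\mathfrak{GEmb}_d)_L$ factors uniquely as an $(\mathrm{Re}_t)_L$-cartesian morphism $g\colon p\to p'$ with $\flat g=\mathrm{id}$ followed by a split $\flat_L$-cartesian morphism $h\colon p'\to q$ (i.e. $h$ is the morphism of the chosen splitting cleavage of $\flat_L$ lifting $\flat f$ at $q$).
   Context: $C^\infty\mathrm{Cart}$: smooth manifolds diffeomorphic to some $\mathbf R^n$ that are closed submanifolds (as subsets) of some $\mathbf R^m$, smooth maps; admissible = open embeddings. $C^\infty\mathrm{Set}$ = presheaves of sets on $C^\infty\mathrm{Cart}$. For a $C^\infty\mathrm{Set}$-enriched category $\mathcal C$ and $L\in C^\infty\mathrm{Cart}$, $\mathcal C_L$ has the same objects and hom-sets $\mathcal C(x,y)(L)$; enriched functors $F$ induce $F_L$; an ordinary category is regarded as enriched with constant hom-presheaves (so $\mathrm{GCart}_L=\mathrm{GCart}$). A split $C^\infty\mathrm{Set}$-enriched Grothendieck fibration is an enriched functor $F$ such that each $F_L$ is a Grothendieck fibration, the functors $\mathcal C_{L}\to\mathcal C_{L'}$ induced by $L'\to L$ preserve cartesian morphisms, together with splitting cleavages of all $F_L$ natural in $L$. An admissibility structure (on an ordinary category): a subcategory of admissible morphisms containing identities, closed under retracts, with $g$, $gf$ admissible $\Rightarrow f$ admissible, and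 admissible base changes along all morphisms. A $C^\infty\mathrm{Set}$-enriched admissibility structure: enriched subcategory $\mathcal C^{\mathrm{ad}}$ such that each $\mathcal C^{\mathrm{ad}}_L\subset\mathcal C_L$ satisfies the first two conditions, and for $L=\mathbf R^0$ also the base change condition. A functor $F$ to a category with admissibility structure is an admissibility fibration if every admissible $b\colon z\to F(y)$ has an $F$-cartesian lift; an enriched $F$ is an enriched admissibility fibration if $F_{\mathbf R^0}$ is one; the source is then given the (enriched) admissibility structure whose admissible morphisms in degree $L$ are the $F_L$-cartesian ones with admissible image. A structured cartesian site is a small category $\mathrm{GCart}$ with an admissibility fibration $\mathrm{Re}_b\colon\mathrm{GCart}\to C^\infty\mathrm{Cart}$. $\mathfrak{Emb}_d$ (the enriched site of smooth families): objects are submersions $p\colon M\to U$ with $d$-dimensional fibers, $U\in C^\infty\mathrm{Cart}$, $M\subset\mathbf R^m\times U$ a closed submanifold with $p$ the restricted projection; the $L$-points of $\mathfrak{Emb}_d(p,q)$ are pairs $(f,h)$ with $h\colon U\to V$ smooth and $f\colon M\times L\to N\times L$ smooth such that $(q\times\mathrm{id}_L)f=(h\times\mathrm{id}_L)(p\times\mathrm{id}_L)$, $f$ commutes with the projection to $L$, and $M\times L\to (U\times L)\times_{V\times L}(N\times L)$ is an open embedding; restriction along $l\colon L'\to L$ sends $f$ to $(\pi_1\circ f\circ(\mathrm{id}_M\times l),\pi_2)$. Its enriched functor $\flat$ to $C^\infty\mathrm{Cart}$ sends $p\mapsto U$, $(f,h)\mapsto h$; admissible $L$-families are those with $h$ an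 open embedding; its splitting in degree $L$ takes the lift $(q^*h,h)\colon h^*q\to q$ (with $h^*N=\{(x,u):(x,h(u))\in N\}\cong U\times_VN$, $q^*h(x,u)=(x,h(u))$) and pulls it back along $L\to\mathbf R^0$. A fibered geometric site with isotopies is a triple $(\flat,\mathrm{Re}_t,\mathrm{Re}_b)$ where $\flat\colon\mathfrak{GEmb}_d\to\mathrm{GCart}$ is a split $C^\infty\mathrm{Set}$-enriched Grothendieck fibration, $(\mathrm{GCart},\mathrm{Re}_b)$ is a structured cartesian site, $\mathrm{Re}_t\colon\mathfrak{GEmb}_d\to\mathfrak{Emb}_d$ is a $C^\infty\mathrm{Set}$-enriched admissibility fibration, $\flat\circ\mathrm{Re}_t=\mathrm{Re}_b\circ\flat$ strictly with $\mathrm{Re}_t$ preserving the splitting cleavages, and for every $L$ the functor $\flat_L\colon(\mathfrak{GEmb}_d)_L\to\mathrm{GCart}$ preserves and reflects admissible morphisms. *)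

From HB Require Import structures.
From mathcomp Require Import all_boot all_order all_algebra.
From mathcomp Require Import boolp classical_sets reals topology normedtype derive.
From mathcomp Require Import Rstruct Rstruct_topology.
Import Order.TTheory GRing.Theory Num.Theory.
Import numFieldNormedType.Exports.


Local Open Scope classical_set_scope.
Local Open Scope ring_scope.

Definition RR : realType := Rdefinitions.R.

(* Euclidean space R^n is modelled as row vectors 'rV[RR]_n; products
   R^a x R^b as 'rV_(a + b) via row_mx / lsubmx / rsubmx. *)
Notation vec n := 'rV[RR]_n.

Definition sub {n : nat} (A : set (vec n)) := {x : vec n | A x}.

Definition tot {n k : nat} {A : set (vec n)} {B : set (vec k)}
  (f : sub A -> sub B) : vec n -> vec k :=
  fun x => match pselect (A x) with
           | left Ax => proj1_sig (f (exist _ x Ax))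
           | right _ => 0
           end.

Fixpoint iterD {a b : nat} (vs : seq (vec a)) (g : vec a -> vec b) : vec a -> vec b :=
  match vs with
  | [::] => g
  | v :: vs' => fun x => 'D_v (iterD vs' g) x
  end.

Definition smooth_open {a b : nat} (W : set (vec a)) (g : vec a -> vec b) : Prop :=
  open W /\
  forall vs : seq (vec a),
    (forall x, W x -> {for x, continuous (iterD vs g)}) /\
    (forall x v, W x -> derivable (iterD vs g) x v).

Definition smooth_on {a b : nat} (A : set (vec a)) (f : vec a -> vec b) : Prop :=
  forall x, A x -> exists W : set (vec a), exists g : vec a -> vec b,
    W x /\ smooth_open W g /\ (forall y, A y -> W y -> g y = f y).

Definition smooth_sub {a b : nat} {A : set (vec a)} {B : set (vec b)}
  (f : sub A -> sub B) : Prop := smooth_on A (tot f).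

Definition flat_coords (n k : nat) : set (vec n) :=
  [set y | forall i : 'I_n, (k <= i)%N -> y ord0 i = 0].

Definition chart_at {n : nat} (A : set (vec n)) (x : vec n) (k : nat) : Prop :=
  (k <= n)%N /\
  exists W : set (vec n), exists phi psi : vec n -> vec n,
    W x /\ smooth_open W phi /\ open (phi @` W) /\ smooth_open (phi @` W) psi /\
    (forall y, W y -> psi (phi y) = y) /\
    (forall z, (phi @` W) z -> phi (psi z) = z) /\
    phi @` (A `&` W) = phi @` W `&` @flat_coords n k.

Definition submanifold {n : nat} (A : set (vec n)) : Prop :=
  forall x, A x -> exists k, chart_at A x k.

Definition submanifold_dim (k : nat) {n : nat} (A : set (vec n)) : Prop :=
  forall x, A x -> chart_at A x k.

Definition tangent {n : nat} (A : set (vec n)) (x : vec n) : set (vec n) :=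
  [set v | exists e : RR, 0 < e /\ exists gam : vec 1 -> vec n,
      smooth_open (ball (0 : vec 1) e) gam /\
      (forall t, ball (0 : vec 1) e t -> A (gam t)) /\
      gam 0 = x /\ 'D_(const_mx 1) gam 0 = v].

Definition open_emb_into {a b : nat} (A : set (vec a)) (B : set (vec b))
  (Phi : vec a -> vec b) : Prop :=
  (forall x, A x -> B (Phi x)) /\
  (forall x y, A x -> A y -> Phi x = Phi y -> x = y) /\
  (exists W : set (vec b), open W /\ Phi @` A = B `&` W) /\
  smooth_on A Phi /\
  exists Psi : vec b -> vec a, smooth_on (Phi @` A) Psi /\
    (forall x, A x -> Psi (Phi x) = x).

Definition is_cart {n : nat} (A : set (vec n)) : Prop :=
  closed A /\ submanifold A /\
  exists k : nat, exists f : sub A -> sub [set: vec k], exists g : sub [set: vec k] -> sub A,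
    smooth_sub f /\ smooth_sub g /\ (forall x, g (f x) = x) /\ (forall y, f (g y) = y).

Record CObj := { amb : nat; car : set (vec amb); car_ok : is_cart car }.
Arguments car : clear implicits.

Definition CHom (L' L : CObj) := {f : sub (car L') -> sub (car L) | smooth_sub f}.

Definition capp {L' L : CObj} (l : CHom L' L) : sub (car L') -> sub (car L) := proj1_sig l.

Definition open_emb {U V : CObj} (h : sub (car U) -> sub (car V)) : Prop :=
  open_emb_into (car U) (car V) (tot h).

(* heterogeneous packaging of maps between objects, to compare maps whose
   (co)domains are only propositionally equal *)
Definition harr {U V : CObj} (h : sub (car U) -> sub (car V)) :
  {UV : CObj * CObj & sub (car UV.1) -> sub (car UV.2)} :=
  existT (fun UV : CObj * CObj => sub (car UV.1) -> sub (car UV.2)) (U, V) h.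

Definition hvec {n : nat} (x : vec n) : {n : nat & vec n} := existT _ n x.

Definition prodset {a b : nat} (A : set (vec a)) (B : set (vec b)) : set (vec (a + b)) :=
  [set z | A (lsubmx z) /\ B (rsubmx z)].

Lemma prodset_row {a b : nat} (A : set (vec a)) (B : set (vec b)) x y :
  A x -> B y -> prodset A B (row_mx x y).
Proof. by move=> Ax By; rewrite /prodset /= row_mxKl row_mxKr. Qed.

(* An object p : M -> U of Emb_d : U in C^oo Cart, M a closed submanifold of
   R^m x U, and the restricted projection is a submersion with d-dimensional
   fibers. *)
Definition emb_obj_ok (d : nat) (U : CObj) (m : nat) (M : set (vec (m + amb U))) : Prop :=
  (forall z, M z -> car U (rsubmx z)) /\
  (exists C : set (vec (m + amb U)), closed C /\ M = C `&` prodset [set: vec m] (car U)) /\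
  submanifold M /\
  (forall z, M z -> rsubmx @` tangent M z = tangent (car U) (rsubmx z)) /\
  (forall u : vec (amb U), submanifold_dim d [set z | M z /\ rsubmx z = u]).

Record EmbObj (d : nat) := {
  e_base : CObj;
  e_m : nat;
  e_car : set (vec (e_m + amb e_base));
  e_ok : emb_obj_ok d e_base e_m e_car }.
Arguments e_car {d} e.
Arguments e_base {d} e.
Arguments e_m {d} e.

Definition e_tot {d : nat} (p : EmbObj d) (L : CObj) := prodset (e_car p) (car L).

(* raw L-points of Emb_d(p, q): pairs (f, h) *)
Definition EmbMor {d : nat} (p q : EmbObj d) (L : CObj) : Type :=
  ((sub (e_tot p L) -> sub (e_tot q L)) * (sub (car (e_base p)) -> sub (car (e_base q))))%type.

(* the fiber product (U x L) x_{V x L} (N x L) *)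
Definition fibprod {d : nat} (p q : EmbObj d) (L : CObj)
  (h : sub (car (e_base p)) -> sub (car (e_base q))) :=
  [set w : vec ((amb (e_base p) + amb L) + ((e_m q + amb (e_base q)) + amb L)) |
     prodset (car (e_base p)) (car L) (lsubmx w) /\ e_tot q L (rsubmx w) /\
     tot h (lsubmx (lsubmx w)) = rsubmx (lsubmx (rsubmx w)) /\
     rsubmx (lsubmx w) = rsubmx (rsubmx w)].

Definition isEmbMor {d : nat} {p q : EmbObj d} {L : CObj} (fh : EmbMor p q L) : Prop :=
  let f := fh.1 in let h := fh.2 in
  smooth_sub f /\ smooth_sub h /\
  (* (q x id_L) f = (h x id_L)(p x id_L) *)
  (forall z : sub (e_tot p L),
      rsubmx (lsubmx (proj1_sig (f z))) = tot h (rsubmx (lsubmx (proj1_sig z)))) /\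
  (forall z : sub (e_tot p L), rsubmx (proj1_sig (f z)) = rsubmx (proj1_sig z)) /\
  (* M x L -> (U x L) x_{V x L} (N x L) is an open embedding *)
  open_emb_into (e_tot p L) (fibprod p q L h)
     (fun z => row_mx (row_mx (rsubmx (lsubmx z)) (rsubmx z)) (tot f z)).

Definition emb_comp {d : nat} {p q r : EmbObj d} {L : CObj}
  (g : EmbMor q r L) (f : EmbMor p q L) : EmbMor p r L :=
  (fun z => g.1 (f.1 z), fun u => g.2 (f.2 u)).

Definition emb_id {d : nat} (p : EmbObj d) (L : CObj) : EmbMor p p L :=
  (fun z => z, fun u => u).

Lemma emb_res_in {d : nat} {p : EmbObj d} {L L' : CObj} (l : CHom L' L)
  (z : sub (e_tot p L')) :
  e_tot p L (row_mx (lsubmx (proj1_sig z))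
                    (proj1_sig (capp l (exist _ (rsubmx (proj1_sig z)) (proj2 (proj2_sig z)))))).
Proof. apply: prodset_row; [exact: (proj1 (proj2_sig z)) | exact: proj2_sig]. Qed.

Lemma emb_res_out {d : nat} {p q : EmbObj d} {L L' : CObj} (w : sub (e_tot q L))
  (z : vec (e_m p + amb (e_base p) + amb L')) (hz : car L' (rsubmx z)) :
  e_tot q L' (row_mx (lsubmx (proj1_sig w)) (rsubmx z)).
Proof. apply: prodset_row; [exact: (proj1 (proj2_sig w)) | exact: hz]. Qed.

(* restriction along l : L' -> L:  f |-> (pi_1 o f o (id_M x l), pi_2) *)
Definition emb_res {d : nat} {p q : EmbObj d} {L L' : CObj} (l : CHom L' L)
  (fh : EmbMor p q L) : EmbMor p q L' :=
  (fun z : sub (e_tot p L') =>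
     let w := fh.1 (exist _ _ (emb_res_in l z)) in
     exist _ _ (emb_res_out w (proj1_sig z) (proj2 (proj2_sig z))),
   fh.2).

Definition emb_adm {d : nat} {p q : EmbObj d} {L : CObj} (fh : EmbMor p q L) : Prop :=
  open_emb fh.2.

Record Cat := {
  ob : Type;
  hom : ob -> ob -> Type;
  comp : forall x y z, hom y z -> hom x y -> hom x z;
  idm : forall x, hom x x;
  comp_assoc : forall x y z w (h : hom z w) (g : hom y z) (f : hom x y),
      comp _ _ _ h (comp _ _ _ g f) = comp _ _ _ (comp _ _ _ h g) f;
  comp_id_l : forall x y (f : hom x y), comp _ _ _ (idm y) f = f;
  comp_id_r : forall x y (f : hom x y), comp _ _ _ f (idm x) = f }.
Arguments hom {c} x y.
Arguments comp {c x y z}.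
Arguments idm {c}.

(* a C^oo Set-enriched category: hom-presheaves on C^oo Cart *)
Record ECat := {
  eob : Type;
  ehom : eob -> eob -> CObj -> Type;
  ecomp : forall L x y z, ehom y z L -> ehom x y L -> ehom x z L;
  eidm : forall L x, ehom x x L;
  eres : forall x y L L', CHom L' L -> ehom x y L -> ehom x y L';
  ecomp_assoc : forall L x y z w (h : ehom z w L) (g : ehom y z L) (f : ehom x y L),
      ecomp _ _ _ _ h (ecomp _ _ _ _ g f) = ecomp _ _ _ _ (ecomp _ _ _ _ h g) f;
  ecomp_id_l : forall L x y (f : ehom x y L), ecomp _ _ _ _ (eidm L y) f = f;
  ecomp_id_r : forall L x y (f : ehom x y L), ecomp _ _ _ _ f (eidm L x) = f;
  eres_id : forall x y L (i : CHom L L) (f : ehom x y L),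
      (forall z, capp i z = z) -> eres _ _ _ _ i f = f;
  eres_comp : forall x y L L' L'' (l : CHom L' L) (l' : CHom L'' L') (l'' : CHom L'' L)
      (f : ehom x y L),
      (forall z, capp l'' z = capp l (capp l' z)) ->
      eres _ _ _ _ l'' f = eres _ _ _ _ l' (eres _ _ _ _ l f);
  eres_ecomp : forall x y z L L' (l : CHom L' L) (g : ehom y z L) (f : ehom x y L),
      eres _ _ _ _ l (ecomp _ _ _ _ g f) = ecomp _ _ _ _ (eres _ _ _ _ l g) (eres _ _ _ _ l f);
  eres_eidm : forall x L L' (l : CHom L' L), eres _ _ _ _ l (eidm L x) = eidm L' x }.
Arguments ehom {e} x y L.
Arguments ecomp {e L x y z}.
Arguments eidm {e}.
Arguments eres {e x y L L'}.

Section Site.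
Variables (d : nat) (G : Cat) (E : ECat).
Variables (Rb_ob : ob G -> CObj)
          (Rb_hom : forall a b, hom a b -> CHom (Rb_ob a) (Rb_ob b)).
(* flat : GEmb_d -> GCart (enriched, GCart with constant hom-presheaves) *)
Variables (fl_ob : eob E -> ob G)
          (fl_hom : forall L x y, ehom x y L -> hom (fl_ob x) (fl_ob y)).
(* the splitting cleavage of flat_L: lift of u : a -> flat q at q *)
Variable cl : forall L (q : eob E) (a : ob G), hom a (fl_ob q) -> {c : eob E & ehom c q L}.
Variables (Rt_ob : eob E -> EmbObj d)
          (Rt_hom : forall L x y, ehom x y L -> EmbMor (Rt_ob x) (Rt_ob y) L).


Definition Rb_functor : Prop :=
  (forall a b c (g : hom b c) (f : hom a b) z,
      capp (Rb_hom _ _ (comp g f)) z = capp (Rb_hom _ _ g) (capp (Rb_hom _ _ f) z)) /\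
  (forall a z, capp (Rb_hom _ _ (idm a)) z = z).

Definition cart_b {a b : ob G} (phi : hom a b) : Prop :=
  forall c (psi : hom c b) (u : CHom (Rb_ob c) (Rb_ob a)),
    (forall z, capp (Rb_hom _ _ phi) (capp u z) = capp (Rb_hom _ _ psi) z) ->
    exists! chi : hom c a, Rb_hom _ _ chi = u /\ comp phi chi = psi.

Definition adm_G {a b : ob G} (phi : hom a b) : Prop :=
  cart_b phi /\ open_emb (capp (Rb_hom _ _ phi)).

Definition Rb_adm_fibration : Prop :=
  forall (y : ob G) (z : CObj) (b : CHom z (Rb_ob y)), open_emb (capp b) ->
    exists x (phi : hom x y), cart_b phi /\
      exists e : Rb_ob x = z, eq_rect _ (fun o => CHom o (Rb_ob y)) (Rb_hom _ _ phi) z e = b.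

Definition fl_functor : Prop :=
  (forall L x y z (g : ehom y z L) (f : ehom x y L),
      fl_hom _ _ _ (ecomp g f) = comp (fl_hom _ _ _ g) (fl_hom _ _ _ f)) /\
  (forall L x, fl_hom _ _ _ (eidm L x) = idm (fl_ob x)) /\
  (forall x y L L' (l : CHom L' L) (f : ehom x y L), fl_hom _ _ _ (eres l f) = fl_hom _ _ _ f).

Definition cart_fl {L : CObj} {a b : eob E} (phi : ehom a b L) : Prop :=
  forall c (psi : ehom c b L) (u : hom (fl_ob c) (fl_ob a)),
    comp (fl_hom _ _ _ phi) u = fl_hom _ _ _ psi ->
    exists! chi : ehom c a L, fl_hom _ _ _ chi = u /\ ecomp phi chi = psi.

Definition fl_split_fibration : Prop :=
  fl_functor /\
  (forall L q a (u : hom a (fl_ob q)),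
      existT (fun b => hom b (fl_ob q)) (fl_ob (projT1 (cl L _ _ u))) (fl_hom _ _ _ (projT2 (cl L _ _ u)))
      = existT (fun b => hom b (fl_ob q)) a u) /\
  (forall L q a (u : hom a (fl_ob q)), cart_fl (projT2 (cl L _ _ u))) /\
  (forall L L' (l : CHom L' L) a b (phi : ehom a b L), cart_fl phi -> cart_fl (eres l phi)) /\
  (forall L q, cl L _ _ (idm (fl_ob q)) = existT (fun c => ehom c q L) q (eidm L q)) /\
  (forall L q a (u : hom a (fl_ob q)) a' (v : hom a' (fl_ob (projT1 (cl L _ _ u)))),
      cl L _ _ (comp (fl_hom _ _ _ (projT2 (cl L _ _ u))) v)
      = existT (fun c => ehom c q L) (projT1 (cl L _ _ v))
               (ecomp (projT2 (cl L _ _ u)) (projT2 (cl L _ _ v)))) /\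
  (forall L L' (l : CHom L' L) q a (u : hom a (fl_ob q)),
      cl L' _ _ u = existT (fun c => ehom c q L') (projT1 (cl L _ _ u)) (eres l (projT2 (cl L _ _ u)))).

Definition Rt_functor : Prop :=
  (forall L x y (g : ehom x y L), isEmbMor (Rt_hom _ _ _ g)) /\
  (forall L x y z (g : ehom y z L) (f : ehom x y L),
      Rt_hom _ _ _ (ecomp g f) = emb_comp (Rt_hom _ _ _ g) (Rt_hom _ _ _ f)) /\
  (forall L x, Rt_hom _ _ _ (eidm L x) = emb_id (Rt_ob x) L) /\
  (forall x y L L' (l : CHom L' L) (f : ehom x y L), Rt_hom _ _ _ (eres l f) = emb_res l (Rt_hom _ _ _ f)).

Definition cart_t {L : CObj} {a b : eob E} (phi : ehom a b L) : Prop :=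
  forall c (psi : ehom c b L) (u : EmbMor (Rt_ob c) (Rt_ob a) L),
    isEmbMor u -> emb_comp (Rt_hom _ _ _ phi) u = Rt_hom _ _ _ psi ->
    exists! chi : ehom c a L, Rt_hom _ _ _ chi = u /\ ecomp phi chi = psi.

Definition adm_E {L : CObj} {a b : eob E} (phi : ehom a b L) : Prop :=
  cart_t phi /\ emb_adm (Rt_hom _ _ _ phi).

(* Re_t is an enriched admissibility fibration: (Re_t)_{R^0} is one.
   R^0 is the (unique) object of C^oo Cart with ambient space R^0. *)
Definition Rt_adm_fibration : Prop :=
  forall L : CObj, amb L = 0%N ->
  forall (y : eob E) (z : EmbObj d) (b : EmbMor z (Rt_ob y) L),
    isEmbMor b -> emb_adm b ->
    exists x (phi : ehom x y L), cart_t phi /\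
      exists e : Rt_ob x = z,
        eq_rect _ (fun o => EmbMor o (Rt_ob y) L) (Rt_hom _ _ _ phi) z e = b.

Definition commutes : Prop :=
  (forall x, e_base (Rt_ob x) = Rb_ob (fl_ob x)) /\
  (forall L x y (g : ehom x y L),
      harr (Rt_hom _ _ _ g).2 = harr (capp (Rb_hom _ _ (fl_hom _ _ _ g)))).

(* Re_t sends the chosen lift cl L q a u to the chosen lift of Emb_d at
   (Re_t q, h := Re_b u): the morphism (q^*h, h) : h^*q -> q pulled back
   along L -> R^0, with h^*N = {(x,u) : u in U, (x,h(u)) in N} and
   q^*h(x,u) = (x,h(u)). *)
Definition Rt_preserves_splitting : Prop :=
  forall L q a (u : hom a (fl_ob q)),
    let c := projT1 (cl L _ _ u) in
    let k := projT2 (cl L _ _ u) in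
    let h := (Rt_hom _ _ _ k).2 in
    harr h = harr (capp (Rb_hom _ _ u)) /\
    e_m (Rt_ob c) = e_m (Rt_ob q) /\
    (forall z : vec (e_m (Rt_ob c) + amb (e_base (Rt_ob c))),
        e_car (Rt_ob c) z <->
        car (e_base (Rt_ob c)) (rsubmx z) /\
        exists y, e_car (Rt_ob q) y /\
                  hvec y = hvec (row_mx (lsubmx z) (tot h (rsubmx z)))) /\
    (* the map is (x, u, l) |-> (x, h u, l) *)
    (forall z : sub (e_tot (Rt_ob c) L),
        hvec (proj1_sig ((Rt_hom _ _ _ k).1 z)) =
        hvec (row_mx (row_mx (lsubmx (lsubmx (proj1_sig z)))
                             (tot h (rsubmx (lsubmx (proj1_sig z)))))
                     (rsubmx (proj1_sig z)))).

Definition fl_pres_refl_adm : Prop :=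
  forall L a b (phi : ehom a b L), adm_E phi <-> adm_G (fl_hom _ _ _ phi).

Definition fibered_geometric_site : Prop :=
  fl_split_fibration /\
  (Rb_functor /\ Rb_adm_fibration) /\
  (Rt_functor /\ Rt_adm_fibration) /\
  commutes /\ Rt_preserves_splitting /\ fl_pres_refl_adm.

End Site.

(* The lift h of [flat f] chosen by the splitting cleavage has source over
   [flat p], so [flat f] factors through [flat h] by a morphism u that is the
   identity up to this identification of objects.  Since h is [flat_L]-cartesian,
   u lifts uniquely to g : p -> p' with h g = f.  Identities of GCart are
   admissible, and [flat_L] reflects admissibility, so g is admissible, in
   particular [(Re_t)_L]-cartesian.  Uniqueness holds because any competitor g'
   lies over the same u. *)

From Stdlib Require Import Eqdep.
From HB Require Import structures.
From mathcomp Require Import all_boot all_order all_algebra.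
From mathcomp Require Import boolp classical_sets functions reals topology normedtype derive.
From mathcomp Require Import Rstruct Rstruct_topology.
Import Order.TTheory GRing.Theory Num.Theory.
Import numFieldNormedType.Exports.
Local Open Scope classical_set_scope.
Local Open Scope ring_scope.

Lemma iterD_id_cons {n} (v : vec n) (vs : seq (vec n)) :
  exists c, iterD (v :: vs) (@id (vec n)) = cst c.
Proof.
elim: vs v => [|w vs IH] v /=.
  exists v; apply/funext => x; exact: derive_id.
have [c /= ->] := IH w.
by exists 0; apply/funext => x; exact: derive_cst.
Qed.

Lemma smooth_open_id n : smooth_open [set: vec n] id.
Proof.
split; first exact: openT.
case=> [|v vs]; first by split=> *; [exact: cvg_id | exact: derivable_id].
have [c ->] := iterD_id_cons v vs.
by split=> *; [exact: cst_continuous | exact: derivable_cst].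
Qed.

Lemma smooth_on_eq_id {n} (A : set (vec n)) (f : vec n -> vec n) :
  (forall x, A x -> f x = x) -> smooth_on A f.
Proof.
move=> fA x Ax; exists setT, id; split=> //; split; first exact: smooth_open_id.
by move=> y Ay _; rewrite fA.
Qed.

Lemma tot_id (U : CObj) x : car U x -> tot (fun z : sub (car U) => z) x = x.
Proof. by rewrite /tot; case: pselect. Qed.

Lemma open_emb_id (U : CObj) : @open_emb U U (fun z => z).
Proof.
have image_tot_id : tot (fun z : sub (car U) => z) @` car U = car U.
  apply/seteqP; split=> [_ [x Ux <-]|y Uy]; first by rewrite tot_id.
  by exists y; rewrite ?tot_id.
split; first by move=> x Ux; rewrite tot_id.
split; first by move=> x y Ux Uy; rewrite !tot_id.
split; first by exists setT; rewrite setIT; split; first exact: openT.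
split; first by apply: smooth_on_eq_id => x; apply: tot_id.
exists id; split; last by move=> x Ux; rewrite tot_id.
by rewrite image_tot_id; apply: smooth_on_eq_id.
Qed.

Lemma CHom_ext (L' L : CObj) (f g : CHom L' L) :
  (forall z, capp f z = capp g z) -> f = g.
Proof.
case: f g => f f_smooth [g g_smooth] /= fg.
have {fg} f_eq_g : f = g by apply/funext.
by subst g; congr exist; exact: Prop_irrelevance.
Qed.

Section HetId.
Context {C : Cat}.

(* [u : a -> b] is the identity of [b] once [a] is identified with [b]; this is
   how the statement expresses [flat g = id] although [flat p] and [flat p']
   are only propositionally equal. *)
Definition het_id {a b : ob C} (u : hom a b) : Prop :=
  existT (fun x => hom x b) a u = existT (fun x => hom x b) b (idm b).

Lemma het_idP {a b : ob C} {u : hom a b} (P : forall x, hom x b -> Prop) :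
  het_id u -> P b (idm b) -> P a u.
Proof.
move=> u_id; have /= a_eq_b := f_equal (@projT1 _ _) u_id; subst a.
by rewrite (inj_pair2 _ _ _ _ _ u_id).
Qed.

Lemma het_id_inj {a b : ob C} (u v : hom a b) : het_id u -> het_id v -> u = v.
Proof. by move=> u_id v_id; apply: inj_pair2 (etrans u_id (esym v_id)). Qed.

Lemma over_eq_het_id {a b c : ob C} {H : hom b c} {F : hom a c} :
  existT (fun x => hom x c) b H = existT (fun x => hom x c) a F ->
  exists u : hom a b, het_id u /\ comp H u = F.
Proof.
move=> HF; have /= b_eq_a := f_equal (@projT1 _ _) HF; subst b.
by rewrite (inj_pair2 _ _ _ _ _ HF); exists (idm a); rewrite comp_id_r.
Qed.

End HetId.

Section Site.
Context {d : nat} {G : Cat} {E : ECat}.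
Context {Rb_ob : ob G -> CObj} {Rb_hom : forall a b : ob G, hom a b -> CHom (Rb_ob a) (Rb_ob b)}.
Context {fl_ob : eob E -> ob G}
        {fl_hom : forall (L : CObj) (x y : eob E), ehom x y L -> hom (fl_ob x) (fl_ob y)}.
Context {Rt_ob : eob E -> EmbObj d}
        {Rt_hom : forall (L : CObj) (x y : eob E), ehom x y L -> EmbMor (Rt_ob x) (Rt_ob y) L}.

Hypothesis Rb_fun : Rb_functor G Rb_ob Rb_hom.

Lemma cart_b_idm x : cart_b G Rb_ob Rb_hom (idm x).
Proof.
have [_ Rb_idm] := Rb_fun.
move=> c psi u Rb_psi; exists psi; split.
  by rewrite comp_id_l; split=> //; apply: CHom_ext => z; rewrite -Rb_psi Rb_idm.
by move=> chi [_ <-]; rewrite comp_id_l.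
Qed.

Lemma adm_G_idm x : adm_G G Rb_ob Rb_hom (idm x).
Proof.
have [_ Rb_idm] := Rb_fun.
split; first exact: cart_b_idm.
have -> : capp (Rb_hom x x (idm x)) = (fun z => z) by apply/funext => z; rewrite Rb_idm.
exact: open_emb_id.
Qed.

Lemma het_id_adm_G a b (u : hom a b) : het_id u -> adm_G G Rb_ob Rb_hom u.
Proof.
move=> u_id; apply: (het_idP (fun x (v : hom x b) => adm_G G Rb_ob Rb_hom v) u_id).
exact: adm_G_idm.
Qed.

Hypothesis fl_adm : fl_pres_refl_adm d G E Rb_ob Rb_hom fl_ob fl_hom Rt_ob Rt_hom.

Lemma vertical_cart_t L p p' (g : ehom p p' L) :
  het_id (fl_hom L p p' g) -> cart_t d E Rt_ob Rt_hom g.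
Proof. by move=> /het_id_adm_G /fl_adm []. Qed.

End Site.

Theorem proposition4p2p16
  (d : nat) (G : Cat) (E : ECat)
  (Rb_ob : ob G -> CObj)
  (Rb_hom : forall a b : ob G, hom a b -> CHom (Rb_ob a) (Rb_ob b))
  (fl_ob : eob E -> ob G)
  (fl_hom : forall (L : CObj) (x y : eob E), ehom x y L -> hom (fl_ob x) (fl_ob y))
  (cl : forall (L : CObj) (q : eob E) (a : ob G), hom a (fl_ob q) -> {c : eob E & ehom c q L})
  (Rt_ob : eob E -> EmbObj d)
  (Rt_hom : forall (L : CObj) (x y : eob E), ehom x y L -> EmbMor (Rt_ob x) (Rt_ob y) L) :
  fibered_geometric_site d G E Rb_ob Rb_hom fl_ob fl_hom cl Rt_ob Rt_hom ->
  forall (L : CObj) (p q : eob E) (f : ehom p q L),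
    (* the split flat_L-cartesian lift h : p' -> q of flat f at q *)
    let p' := projT1 (cl L q (fl_ob p) (fl_hom L p q f)) in
    let h := projT2 (cl L q (fl_ob p) (fl_hom L p q f)) in
    exists! g : ehom p p' L,
      cart_t d E Rt_ob Rt_hom g /\
      existT (fun b => hom b (fl_ob p')) (fl_ob p) (fl_hom L p p' g)
        = existT (fun b => hom b (fl_ob p')) (fl_ob p') (idm (fl_ob p')) /\
      ecomp h g = f.
Proof.
move=> [[_ [cl_lifts [cl_cart _]]] [[Rb_fun _] [_ [_ [_ fl_adm]]]]] L p q f p' h.
have [u [u_id hu_f]] := over_eq_het_id (cl_lifts L q (fl_ob p) (fl_hom L p q f)).
have [g [[gu hg_f] g_unique]] := cl_cart L q (fl_ob p) (fl_hom L p q f) p f u hu_f.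
exists g; split.
  by split; [apply: (vertical_cart_t Rb_fun fl_adm); rewrite gu | rewrite gu].
move=> g' [_ [g'_id hg'_f]]; apply: g_unique; split=> //.
exact: het_id_inj g'_id u_id.
Qed.
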